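(* Let $G$ be a graph, $\mathcal{B}$ a set of balls of $G$, $X\subset V(G)$ and $\mathcal{H}$ the set of connected components of $G-X$. Let $u\in V(G)$, $B=B_r(u)\in\mathcal{B}$, and let $T$ be a positive non-clashing teaching map for $\mathcal{B}$. Suppose there exist $H_0\in\mathcal{H}$ and $v\in V(H_0)$ such that $|[v]_{\sim_{\mathcal{B}}}\cap T(B)|\ge 3$. Then there exists $z\in [v]_{\sim_{\mathcal{B}}}\cap T(B)$ such that the map obtained from $T$ by replacing $T(B)$ with $T(B)\setminus\{z\}$ is a positive non-clashing teaching map for $\mathcal{B}$.
   Context: For a graph $G$, $r\ge 0$ and $v\in V(G)$, the ball $B_r(v)$ is the set of vertices at distance at most $r$ from $v$. For a set $\mathcal{B}$ of balls, a positive teaching map $T$ assigns to each $B\in\mathcal{B}$ a set $T(B)\subseteq B$; $T$ is non-clashing for $\mathcal{B}$ if for every pair of distinct $B_1,B_2\in\mathcal{B}$ there is $w\in T(B_1)\cup T(B_2)$ with $w\notin B_1\cap B_2$. Two components $H,H'\in\mathcal{H}$ are twin-blocks, $H\sim_{\mathcal{B}}H'$, if there is an isomorphism $\alpha$ from $H$ to $H'$ such that (i) for each $u\in V(H)$ and $x\in X$, $ux\in E(G)$ iff $\alpha(u)x\in E(G)$, and (ii) for each $u\in V(H)$ and $r\in\mathbb{N}$, $B_r(u)\in\mathcal{B}$ iff $B_r(\alpha(u))\in\mathcal{B}$. For each pair $H\sim_{\mathcal{B}}H'$ one such isomorphism $\alpha_{H,H'}$ is fixed (the canonical isomorphism). For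 $v\in V(H)$, $[v]_{\sim_{\mathcal{B}}}=\{\alpha_{H,H'}(v) : H'\sim_{\mathcal{B}}H\}$. *)

(* finite simple graphs as symmetric irreflexive relations on a finType.
   boolp (MathComp-Analysis classical layer) is used only to turn the Prop-valued
   class membership into a finite set. *)
From mathcomp Require Import all_boot.
From mathcomp Require Import boolp.
Set Implicit Arguments. Unset Strict Implicit. Unset Printing Implicit Defensive.

Section Defs.
Variable V : finType.
Variable e : rel V.

Fixpoint ball (r : nat) (v : V) : {set V} :=
  match r with
  | 0 => [set v]
  | r'.+1 => ball r' v :|: [set w | [exists y in ball r' v, e y w]]
  end.

Definition edge_out (X : {set V}) : rel V :=
  [rel a b | [&& e a b, a \notin X & b \notin X]].

Definition is_comp (X C : {set V}) : Prop :=
  exists2 x, x \in C & (x \notin X) /\ C = [set y | connect (edge_out X) x y].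

Definition twin_iso (B : {set {set V}}) (X H H' : {set V}) (alpha : V -> V) : Prop :=
  [/\ {in H &, injective alpha},
      alpha @: H = H',
      {in H &, forall x y, e x y = e (alpha x) (alpha y)},
      (forall u x, u \in H -> x \in X -> e u x = e (alpha u) x) &
      (forall u r, u \in H -> (ball r u \in B) = (ball r (alpha u) \in B))].

Definition twin_blocks (B : {set {set V}}) (X H H' : {set V}) : Prop :=
  exists alpha : V -> V, twin_iso B X H H' alpha.

(* [v]_{~_B} for v in H, w.r.t. the fixed canonical isomorphisms canon H H' *)
Definition twin_class (B : {set {set V}}) (X : {set V})
    (canon : {set V} -> {set V} -> V -> V) (H : {set V}) (v : V) : {set V} :=
  [set y | `[< exists H', [/\ is_comp X H', twin_blocks B X H H' & y = canon H H' v] >]].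

Definition positive_map (B : {set {set V}}) (T : {set V} -> {set V}) : Prop :=
  forall b, b \in B -> T b \subset b.

Definition non_clashing (B : {set {set V}}) (T : {set V} -> {set V}) : Prop :=
  forall b1 b2, b1 \in B -> b2 \in B -> b1 != b2 ->
    exists2 w, w \in T b1 :|: T b2 & w \notin b1 :&: b2.

End Defs.

From mathcomp Require Import all_boot.
From mathcomp Require Import boolp.
Set Implicit Arguments. Unset Strict Implicit. Unset Printing Implicit Defensive.

(* Let a ball B_R(c) contain two twin copies of v lying in distinct components
   H1, H2 of G - X. The centre c misses one of them, say H1, and a shortest path
   from c to the copy in H1 enters H1 from X and then stays in H1; transporting
   it along the twin isomorphisms gives a path of the same length to every other
   twin copy of v. So any ball containing two elements of [v] contains all of
   them, and if T(B) holds three twins z, z2, z3, the example z is redundant: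
   whenever z separates B from another ball, z2 or z3 already does. *)

Section Components.
Variables (V : finType) (e : rel V).
Hypothesis e_sym : symmetric e.
Variable X : {set V}.

Lemma comp_notin H w : is_comp e X H -> w \in H -> w \notin X.
Proof.
case=> x _ [xX ->]; rewrite inE => /connectP [p].
elim/last_ind: p => [_ -> //|p a _].
by rewrite rcons_path last_rcons => /andP [_ /and3P [_ _ aX]] ->.
Qed.

Lemma comp_closed H w y :
  is_comp e X H -> w \in H -> y \notin X -> e y w -> y \in H.
Proof.
move=> HC wH yX eyw; have wX := comp_notin HC wH.
case: HC wH => x _ [_ ->]; rewrite !inE => /connect_trans; apply.
by apply: connect1; rewrite /edge_out /= e_sym eyw wX yX.
Qed.

Lemma comp_eq H1 H2 c :
  is_comp e X H1 -> is_comp e X H2 -> c \in H1 -> c \in H2 -> H1 = H2.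
Proof.
have sym : connect_sym (edge_out e X).
  apply: sym_connect_sym => a b.
  by rewrite /edge_out /= e_sym [(a \notin X) && _]andbC.
case=> x _ [_ ->]; case=> x' _ [_ ->]; rewrite !inE => cx cx'.
by apply/setP => y; rewrite !inE (same_connect sym cx) (same_connect sym cx').
Qed.

End Components.

Section TwinBalls.
Variables (V : finType) (e : rel V).
Hypothesis e_sym : symmetric e.
Variables (B : {set {set V}}) (X : {set V}).

Lemma in_ballS R c w :
  (w \in ball e R.+1 c) = (w \in ball e R c) || [exists y in ball e R c, e y w].
Proof. by rewrite /= in_setU inE. Qed.

Lemma twin_iso_ball H H1 H2 a1 a2 c R y :
  is_comp e X H1 -> twin_iso e B X H H1 a1 -> twin_iso e B X H H2 a2 ->
  c \notin H1 -> y \in H -> a1 y \in ball e R c -> a2 y \in ball e R c.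
Proof.
move=> H1C [_ im1 e1 x1 _] [_ _ e2 x2 _] cH1.
have a1H y' : y' \in H -> a1 y' \in H1 by rewrite -im1; apply: imset_f.
elim: R y => [|R IH] y yH.
  by rewrite inE => /eqP a1yc; move: cH1; rewrite -a1yc a1H.
rewrite !in_ballS => /orP [/IH -> // | /existsP [w /andP [wR ew]]].
apply/orP; right; apply/existsP.
have [wX | wX] := boolP (w \in X).
  by exists w; rewrite wR /= e_sym -x2 // x1 // e_sym.
have /imsetP [y' y'H wE] : w \in a1 @: H.
  by rewrite im1; exact: (comp_closed e_sym H1C (a1H _ yH) wX ew).
by exists (a2 y'); rewrite IH -?wE //= -e2 // e1 // -wE.
Qed.

Variable canon : {set V} -> {set V} -> V -> V.
Hypothesis canonP : forall H H', is_comp e X H -> is_comp e X H' ->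
  twin_blocks e B X H H' -> twin_iso e B X H H' (canon H H').
Variables (H0 : {set V}) (v : V).
Hypotheses (H0C : is_comp e X H0) (vH0 : v \in H0).

Lemma twin_classP y :
  y \in twin_class e B X canon H0 v ->
  exists2 H, is_comp e X H & twin_iso e B X H0 H (canon H0 H) /\ y = canon H0 H v.
Proof. by rewrite inE => /asboolP [H [HC tb ->]]; exists H => //; split; auto. Qed.

Lemma twin_class_ball y1 y2 y R c :
  y1 \in twin_class e B X canon H0 v -> y2 \in twin_class e B X canon H0 v ->
  y \in twin_class e B X canon H0 v -> y1 != y2 ->
  y1 \in ball e R c -> y2 \in ball e R c -> y \in ball e R c.
Proof.
move=> /twin_classP [H1 H1C [iso1 ->]] /twin_classP [H2 H2C [iso2 ->]].
move=> /twin_classP [H HC [iso ->]] y12 y1R y2R.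
have [cH1 | cH1] := boolP (c \in H1); last exact: twin_iso_ball iso1 iso cH1 vH0 y1R.
have [cH2 | cH2] := boolP (c \in H2); last exact: twin_iso_ball iso2 iso cH2 vH0 y2R.
by move: y12; rewrite (comp_eq e_sym H1C H2C cH1 cH2) eqxx.
Qed.

End TwinBalls.

Section ShrinkTeaching.
Variables (V : finType) (B : {set {set V}}) (T : {set V} -> {set V}).
Hypotheses (Tpos : positive_map B T) (Tnc : non_clashing B T).

Definition shrink_teaching b0 z b := if b == b0 then T b :\ z else T b.

Lemma positive_map_shrink b0 z : positive_map B (shrink_teaching b0 z).
Proof.
move=> b bB; rewrite /shrink_teaching; case: ifP => _; last exact: Tpos.
exact: subset_trans (subsetDl _ _) (Tpos bB).
Qed.

Lemma non_clashing_shrink b0 z :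
  b0 \in B -> (forall b, b \in B -> T b0 :\ z \subset b -> z \in b) ->
  non_clashing B (shrink_teaching b0 z).
Proof.
move=> b0B zP.
have sep b : b \in B -> b0 != b ->
    exists2 w, w \in T b0 :\ z :|: T b & w \notin b0 :&: b.
  move=> bB b0b; have [w wT wb] := Tnc b0B bB b0b.
  have [wz | wz] := eqVneq w z; last first.
    by exists w => //; move: wT; rewrite !inE wz.
  subst w.
  have [zT | zT] := boolP (z \in T b); first by exists z; rewrite // inE zT orbT.
  have zb : z \notin b.
    move: wT wb; rewrite !inE (negbTE zT) orbF => zT0.
    by rewrite (subsetP (Tpos b0B) _ zT0).
  have /subsetPn [w wT0 wb'] : ~~ (T b0 :\ z \subset b) by apply: contra zb; apply: zP.
  by exists w; rewrite ?in_setU ?in_setI ?wT0 // negb_and wb' orbT.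
move=> b1 b2 b1B b2B b12; rewrite /shrink_teaching.
case: eqP => [e1 | _]; case: eqP => [e2 | _].
- by move: b12; rewrite e1 e2 eqxx.
- by rewrite e1 in b12 *; exact: sep.
- rewrite e2 eq_sym in b12 *; have [w wT wb] := sep b1 b1B b12.
  by exists w; rewrite (setUC, setIC).
- exact: Tnc.
Qed.

End ShrinkTeaching.

Theorem lemma9 (V : finType) (e : rel V)
    (e_sym : symmetric e) (e_irr : irreflexive e)
    (B : {set {set V}}) (Hball : forall b, b \in B -> exists r v, b = ball e r v)
    (X : {set V})
    (canon : {set V} -> {set V} -> V -> V)
    (Hcanon : forall H H', is_comp e X H -> is_comp e X H' ->
        twin_blocks e B X H H' -> twin_iso e B X H H' (canon H H'))
    (u : V) (r : nat) (HB : ball e r u \in B)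
    (T : {set V} -> {set V})
    (Tpos : positive_map B T) (Tnc : non_clashing B T)
    (H0 : {set V}) (v : V) (HH0 : is_comp e X H0) (Hv : v \in H0)
    (Hcard : 3 <= #|twin_class e B X canon H0 v :&: T (ball e r u)|) :
  exists2 z, z \in twin_class e B X canon H0 v :&: T (ball e r u) &
    let T' := fun b => if b == ball e r u then T b :\ z else T b in
    positive_map B T' /\ non_clashing B T'.
Proof.
have [z [z2 [z3 [[zS z2S z3S] [zz2 z23 z3z]]]]] := card_gt2P Hcard.
exists z => //; split; first exact: positive_map_shrink.
apply: non_clashing_shrink => // b /Hball [R [c ->]] Tb.
move: zS z2S z3S; rewrite !in_setI => /andP [zC zT] /andP [z2C z2T] /andP [z3C z3T].
apply: (twin_class_ball e_sym Hcanon HH0 Hv z2C z3C zC z23);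
  apply: (subsetP Tb); rewrite in_setD1 andbC.
- by rewrite z2T eq_sym.
- by rewrite z3T.
Qed.
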